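(* Let $p,q$ be nonzero integers such that $q$ does not divide $2p$. Then the group $G_{p,q}=\langle a,b,s,t\mid [a,b],\ s^{-1}a^qs=a^pb,\ t^{-1}a^qt=a^pb^{-1}\rangle$ is not residually finite. *)

From HB Require Import structures.
From mathcomp Require Import all_boot all_order all_algebra all_fingroup.
Set Implicit Arguments. Unset Strict Implicit. Unset Printing Implicit Defensive.

Inductive word (X : Type) : Type :=
  | W1 : word X
  | Wgen : X -> word X
  | Wmul : word X -> word X -> word X
  | Winv : word X -> word X.
Arguments W1 {X}.

Definition wpow X (w : word X) (z : int) : word X :=
  match z with
  | Posz n => iter n (Wmul w) W1
  | Negz n => Winv (iter n.+1 (Wmul w) W1)
  end.

Definition wcomm X (u v : word X) : word X :=
  Wmul (Wmul (Wmul (Winv u) (Winv v)) u) v.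

(* Equality in the group <X | rels>: the smallest congruence on words
   containing the group axioms and the relations (l = r) for (l, r) in rels.
   [weq rels u v] means u and v represent the same element of the
   presented group. *)
Inductive weq X (rels : (word X * word X) -> Prop) : word X -> word X -> Prop :=
  | weq_refl u : weq rels u u
  | weq_sym u v : weq rels u v -> weq rels v u
  | weq_trans u v w : weq rels u v -> weq rels v w -> weq rels u w
  | weq_mul u u' v v' : weq rels u u' -> weq rels v v' ->
      weq rels (Wmul u v) (Wmul u' v')
  | weq_inv u u' : weq rels u u' -> weq rels (Winv u) (Winv u')
  | weq_assoc u v w : weq rels (Wmul (Wmul u v) w) (Wmul u (Wmul v w))
  | weq_mul1w u : weq rels (Wmul W1 u) u
  | weq_mulw1 u : weq rels (Wmul u W1) u
  | weq_mulVw u : weq rels (Wmul (Winv u) u) W1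
  | weq_mulwV u : weq rels (Wmul u (Winv u)) W1
  | weq_rel l r : rels (l, r) -> weq rels l r.

Fixpoint weval X (gT : finGroupType) (f : X -> gT) (w : word X) : gT :=
  match w with
  | W1 => 1%g
  | Wgen x => f x
  | Wmul u v => (weval f u * weval f v)%g
  | Winv u => ((weval f u)^-1)%g
  end.

(* Homomorphisms from <X | rels> to a finite group gT correspond exactly to
   assignments f : X -> gT satisfying the relations. *)
Definition respects X (rels : (word X * word X) -> Prop)
  (gT : finGroupType) (f : X -> gT) : Prop :=
  forall l r, rels (l, r) -> weval f l = weval f r.

Definition residually_finite X (rels : (word X * word X) -> Prop) : Prop :=
  forall w : word X, ~ weq rels w W1 ->
    exists (gT : finGroupType) (f : X -> gT),
      respects rels f /\ weval f w <> 1%g.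

Inductive genG := ga | gb | gs | gt.

Definition Gpq_rels (p q : int) : (word genG * word genG) -> Prop :=
  fun lr =>
    let a := Wgen ga in let b := Wgen gb in
    let s := Wgen gs in let t := Wgen gt in
    lr = (wcomm a b, W1)
    \/ lr = (Wmul (Wmul (Winv s) (wpow a q)) s, Wmul (wpow a p) b)
    \/ lr = (Wmul (Wmul (Winv t) (wpow a q)) t, Wmul (wpow a p) (Winv b)).

From mathcomp Require Import all_boot all_order all_algebra all_fingroup cyclic.
From mathcomp Require Import ring zify.
Import Order.TTheory GRing.Theory Num.Theory.
Set Implicit Arguments. Unset Strict Implicit. Unset Printing Implicit Defensive.

(* In a finite quotient let N be the order of the image of a,
   g = gcd(N, q) and k = N / g, so that a^(qk) = 1. Conjugating by s and t
   gives (a^p b)^k = (a^p b^-1)^k = 1, hence a^(2pk) = 1 and g divides 2p: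
   a^(2p) is a power of a^q. As s^-1 a^q s = a^p b commutes with a, the power
   a^q, hence also a^(2p), commutes with s a s^-1; so the commutator
   [a^(2p), s a s^-1] dies in every finite quotient.
   It is nontrivial in G_{p,q}: sending b to a^(3p) makes G_{p,q} act on the
   Britton normal forms of the HNN extension
   <a, s, t | s^-1 a^q s = a^(4p), t^-1 a^q t = a^(-2p)>, and there the
   commutator moves the empty normal form because q does not divide 2p. *)

Section WordAction.
Variables (X T : Type) (act : X -> bool -> T -> T).

(* [wact false w] is the action of [w], [wact true w] that of [w^-1]. *)
Fixpoint wact (b : bool) (w : word X) : T -> T :=
  match w with
  | W1 => id
  | Wgen x => act x b
  | Wmul u v => if b then wact b v \o wact b u else wact b u \o wact b v
  | Winv u => wact (~~ b) u
  end.

Variable P : pred T.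
Hypothesis act_stable : forall x b t, P t -> P (act x b t).
Hypothesis actK : forall x b, {in P, cancel (act x b) (act x (~~ b))}.

Lemma wact_stable w b t : P t -> P (wact b w t).
Proof.
elim: w b t => [|x|u IHu v IHv|u IHu] b t Pt //=; first exact: act_stable.
  by case: b => /=; [apply: IHv; apply: IHu | apply: IHu; apply: IHv].
exact: IHu.
Qed.

Lemma wactK w b : {in P, cancel (wact b w) (wact (~~ b) w)}.
Proof.
elim: w b => [|x|u IHu v IHv|u IHu] b t Pt //=; first exact: actK.
  case: b => /=.
    by rewrite (IHv true) ?(IHu true) //; apply: wact_stable.
  by rewrite (IHu false) ?(IHv false) //; apply: wact_stable.
exact: IHu.
Qed.

Lemma wact_inv_eq u v :
  {in P, wact false u =1 wact false v} -> {in P, wact true u =1 wact true v}.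
Proof.
move=> uv t Pt; have Pu := wact_stable u true Pt.
by rewrite -{2}(wactK u true Pt) uv // (wactK v false Pu).
Qed.

Lemma wact_weq (rels : word X * word X -> Prop) :
  (forall l r, rels (l, r) -> {in P, wact false l =1 wact false r}) ->
  forall u v, weq rels u v -> {in P, wact false u =1 wact false v}.
Proof.
move=> rels_act u v uv; suff: forall b, {in P, wact b u =1 wact b v} by [].
elim: uv => {u v} [u | u v _ IH | u v w _ IHuv _ IHvw | u u' v v' _ IHu _ IHv
  | u u' _ IH | u v w | u | u | u | u | l r lr] b t Pt //=.
- by rewrite IH.
- by rewrite IHuv ?IHvw.
- case: b => /=.
    by rewrite (IHu true) ?(IHv true) //; apply: wact_stable.
  by rewrite (IHv false) ?(IHu false) //; apply: wact_stable.
- by rewrite IH.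
- by case: b.
- by case: b.
- by case: b.
- by case: b; rewrite /= (wactK u false).
- by case: b; rewrite /= (wactK u true).
- have lr_act := rels_act _ _ lr.
  by case: b; [apply: (wact_inv_eq lr_act) | apply: lr_act].
Qed.

End WordAction.

Section HNNNormalForm.
Variables (L : eqType) (ex : L * bool -> int).
Hypothesis ex_neq0 : forall d, ex d != 0.
Local Open Scope ring_scope.

(* A stable letter [d] is [(l, true)] or its inverse [(l, false)], and
   satisfies [a^(ex d) d = d a^(ex (letterV d))]. The list
   [[:: (i_1, d_1); ...; (i_k, d_k)]] encodes [a^i_1 d_1 ... a^i_k d_k]; it is a
   normal form when [0 <= i_j < |ex d_j|] and no [d a^0 d^-1] occurs. *)
Definition letterV (d : L * bool) : L * bool := (d.1, ~~ d.2).

Lemma letterVK : involutive letterV.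
Proof. by case=> l []. Qed.

Definition modl d : int := `|ex d|.
Definition carry d : int := Num.sg (ex d) * ex (letterV d).

Fixpoint shift (n : int) (x : seq (int * (L * bool))) : seq (int * (L * bool)) :=
  if x is (i, d) :: r then
    (((i + n) %% modl d)%Z, d) :: shift (((i + n) %/ modl d)%Z * carry d) r
  else [::].

Definition cancels d (x : seq (int * (L * bool))) : bool :=
  if x is (i, e) :: _ then (i == 0) && (e == letterV d) else false.

Definition push d x : seq (int * (L * bool)) :=
  if cancels d x then behead x else (0, d) :: x.

Fixpoint is_nf (x : seq (int * (L * bool))) : bool :=
  if x is (i, d) :: r then [&& 0 <= i, i < modl d, ~~ cancels d r & is_nf r]
  else true.

Lemma modl_gt0 d : 0 < modl d.
Proof. by rewrite normr_gt0. Qed.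

Lemma modl_neq0 d : modl d != 0.
Proof. by rewrite gt_eqF ?modl_gt0. Qed.

Lemma modz_modl m d : (m %% modl d)%Z = (m %% ex d)%Z.
Proof. by rewrite /modl -abszE modz_abs. Qed.

Lemma size_shift n x : size (shift n x) = size x.
Proof. by elim: x n => [|[i d] r IH] n //=; rewrite IH. Qed.

Lemma shiftD n k x : shift n (shift k x) = shift (n + k) x.
Proof.
elim: x n k => [|[i d] r IH] n k //=.
rewrite IH modzDml addrA [i + n + k]addrAC -mulrDl.
congr ((_, _) :: shift (_ * _) _).
have -> : i + k + n = ((i + k) %/ modl d)%Z * modl d + (((i + k) %% modl d)%Z + n).
  by rewrite addrA -divz_eq.
by rewrite divzMDl ?modl_neq0 // addrC.
Qed.

Lemma shift0 x : is_nf x -> shift 0 x = x.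
Proof.
elim: x => [|[i d] r IH] //= /and4P[i_ge0 i_lt _ nf_r].
by rewrite addr0 modz_small ?i_ge0 // divz_small ?i_ge0 // mul0r IH.
Qed.

Lemma cancels_shift d n r :
  (ex (letterV d) %| n)%Z -> is_nf r -> cancels d (shift n r) = cancels d r.
Proof.
case/dvdzP=> c ->; case: r => [|[j e] r] //=.
have [-> /and4P[j_ge0 j_lt _ _] | _ _] := eqVneq e (letterV d); last by rewrite !andbF.
by rewrite modz_modl addrC modzMDl -modz_modl modz_small ?j_ge0.
Qed.

Lemma nf_shift n x : is_nf x -> is_nf (shift n x).
Proof.
elim: x n => [|[i d] r IH] n //= /and4P[_ _ nc_r nf_r].
rewrite modz_ge0 ?modl_neq0 // ltz_pmod ?modl_gt0 // IH // andbT /=.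
by rewrite cancels_shift // /carry mulrA dvdz_mull.
Qed.

Lemma nf_push d x : is_nf x -> is_nf (push d x).
Proof.
rewrite /push; case: x => [|[i e] r] /=; first by rewrite modl_gt0.
by case: ifP => [_ /and4P[] | nc nf_x] //=; rewrite modl_gt0 nc.
Qed.

Lemma push_letterV_cons d x : push (letterV d) ((0, d) :: x) = x.
Proof. by rewrite /push /= letterVK !eqxx. Qed.

Lemma pushK d x : is_nf x -> push (letterV d) (push d x) = x.
Proof.
rewrite {2}/push; case: ifP => [| _ _]; last exact: push_letterV_cons.
case: x => [|[i e] r] //= /andP[/eqP-> /eqP->] /and4P[_ _ nc_r _].
by rewrite /push (negbTE nc_r).
Qed.

Lemma shift_ex_cons d y :
  shift (ex d) ((0, d) :: y) = (0, d) :: shift (ex (letterV d)) y.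
Proof.
rewrite /= add0r modz_modl modzz /carry mulrA.
have -> : (ex d %/ modl d)%Z = Num.sg (ex d) by rewrite {1}[ex d]numEsg mulzK ?modl_neq0.
by rewrite -expr2 sqr_sg ex_neq0 mul1r.
Qed.

Lemma push_shift_push d x :
  is_nf x -> push (letterV d) (shift (ex d) (push d x)) = shift (ex (letterV d)) x.
Proof.
rewrite {2}/push; case: ifP => [| _ _]; last by rewrite shift_ex_cons push_letterV_cons.
case: x => [|[i e] r] // /andP[/eqP-> /eqP->] /and4P[_ _ nc_r nf_r].
rewrite shift_ex_cons letterVK /= /push cancels_shift ?letterVK ?dvdzz //.
by rewrite (negbTE nc_r).
Qed.

End HNNNormalForm.

Section IntegerPowers.
Variable gT : finGroupType.
Implicit Types (X Y : gT) (x y z : int).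
Local Open Scope group_scope.

Definition expgz X z : gT := X ^+ `|(z %% #[X]%:Z)%Z|.

Lemma absz_mod_order X z : Posz `|(z %% #[X]%:Z)%Z| = (z %% #[X]%:Z)%Z.
Proof. by rewrite gez0_abs // modz_ge0 // eqz_nat -lt0n order_gt0. Qed.

Lemma expgz_mod X x y : (x = y %[mod #[X]%:Z])%Z -> expgz X x = expgz X y.
Proof. by rewrite /expgz => ->. Qed.

Lemma expgz_nat X n : expgz X n%:Z = X ^+ n.
Proof. by rewrite /expgz modz_nat absz_nat expg_mod_order. Qed.

Lemma expgzD X x y : expgz X (x + y)%R = expgz X x * expgz X y.
Proof.
rewrite -expgD -expgz_nat; apply: expgz_mod.
by rewrite PoszD !absz_mod_order modzDml modzDmr.
Qed.

Lemma expgzXn X x k : expgz X x ^+ k = expgz X (x * k%:Z)%R.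
Proof.
rewrite -expgM -expgz_nat; apply: expgz_mod.
by rewrite PoszM absz_mod_order modzMml.
Qed.

Lemma expgz_eq1 X x : (expgz X x == 1) = (#[X]%:Z %| x)%Z.
Proof.
rewrite /expgz -order_dvdn; apply/idP/dvdz_mod0P => [dvd_mod | ->] //.
apply/eqP; rewrite -absz_mod_order eqz_nat; apply: contraTT dvd_mod => nz.
by rewrite gtnNdvd ?lt0n // -ltz_nat absz_mod_order ltz_pmod // ltz_nat order_gt0.
Qed.

Lemma weval_wpow (V : Type) (f : V -> gT) w z :
  weval f (wpow w z) = expgz (weval f w) z.
Proof.
set X := weval f w.
have weval_iter n : weval f (iter n (Wmul w) W1) = X ^+ n.
  by elim: n => //= n ->; rewrite expgS.
case: z => n /=; first by rewrite weval_iter expgz_nat.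
apply/eqP; rewrite -/X weval_iter -expgS eq_invg_mul -expgz_nat -expgzD.
by rewrite NegzE addrC subrr expgz_nat.
Qed.

Lemma weval_wcomm (V : Type) (f : V -> gT) u v :
  weval f (wcomm u v) = [~ weval f u, weval f v].
Proof. by rewrite /= /commg /conjg !mulgA. Qed.

Lemma expgz_mem_cycle (X : gT) q z :
  (gcdz #[X]%:Z q %| z)%Z -> expgz X z \in <[expgz X q]>.
Proof.
have [u [v <-]] := Bezoutz #[X]%:Z q.
case/dvdzP=> c ->; apply/cycleP; exists `|(c * v %% #[X]%:Z)%Z|.
rewrite expgzXn; apply: expgz_mod; rewrite absz_mod_order modzMmr.
have -> : (c * (u * #[X]%:Z + v * q) = c * u * #[X]%:Z + q * (c * v))%R by ring.
by rewrite modzMDl.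
Qed.

Section ConjugationRelations.
Variables (p q : int) (A B S T : gT).
Hypotheses (cAB : commute A B) (AqS : expgz A q ^ S = expgz A p * B).
Hypothesis (AqT : expgz A q ^ T = expgz A p * B^-1).

Lemma gcdz_order_dvd : (gcdz #[A]%:Z q %| (2%:Z * p)%R)%Z.
Proof.
set N := #[A]; set g := gcdn N `|q|; set k := (N %/ g)%N.
have kg : (k * g)%N = N by rewrite divnK // dvdn_gcdl.
have Ngk : Posz N = (g%:Z * k%:Z)%R by rewrite -PoszM mulnC kg.
have k_neq0 : Posz k != 0.
  by rewrite eqz_nat -lt0n; move: (order_gt0 A); rewrite -/N -kg muln_gt0 => /andP[].
have Aqk : expgz A q ^+ k = 1.
  by apply/eqP; rewrite expgzXn expgz_eq1 -/N Ngk dvdz_mul ?dvdzz ?(dvdz_gcdr N q).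
have cApB : commute (expgz A p) B by apply/commute_sym/commuteX/commute_sym.
have ApBk : (expgz A p * B) ^+ k = 1 by rewrite -AqS -conjXg Aqk conj1g.
have ApBVk : (expgz A p * B^-1) ^+ k = 1 by rewrite -AqT -conjXg Aqk conj1g.
rewrite expgMn // in ApBk; rewrite expgMn ?expVgn in ApBVk; last exact: commuteV.
move/eqP: ApBVk; rewrite mulg_eq1 invgK => /eqP Apk.
move/eqP: ApBk; rewrite -Apk -expgD expgzXn expgz_eq1 -/N {1}Ngk.
have -> : (p * (k + k)%N%:Z)%R = (2%:Z * p * k%:Z)%R by rewrite PoszD; ring.
by rewrite dvdz_mul2r.
Qed.

Lemma commute_expgz_conj : commute (expgz A q) (A ^ S^-1).
Proof.
have c : commute (expgz A q ^ S) A.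
  by rewrite AqS; apply/commute_sym/commuteM; [exact/commuteX/commute_refl | exact: cAB].
by apply/commgP; rewrite -(conjg_eq1 _ S) conjRg conjgKV; apply/commgP.
Qed.

End ConjugationRelations.
End IntegerPowers.

Definition Gpq_wit (p : int) : word genG :=
  wcomm (wpow (Wgen ga) (2%:Z * p)%R)
        (Wmul (Wmul (Wgen gs) (Wgen ga)) (Winv (Wgen gs))).

Section GpqAction.
Variables p q : int.
Local Open Scope ring_scope.

Definition Gpq_exp (d : bool * bool) : int :=
  if d.2 then q else if d.1 then - (2 * p) else 4 * p.

Definition Gpq_act (g : genG) (b : bool) :
    seq (int * (bool * bool)) -> seq (int * (bool * bool)) :=
  match g with
  | ga => shift Gpq_exp (if b then -1 else 1)
  | gb => shift Gpq_exp (if b then - (3 * p) else 3 * p)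
  | gs => push (false, ~~ b)
  | gt => push (true, ~~ b)
  end.

Hypotheses (p_neq0 : p != 0) (q_neq0 : q != 0).

Lemma Gpq_exp_neq0 d : Gpq_exp d != 0.
Proof. by case: d => [[] []]; rewrite /Gpq_exp /= ?oppr_eq0 ?mulf_neq0. Qed.

Lemma Gpq_act_stable g b x : is_nf Gpq_exp x -> is_nf Gpq_exp (Gpq_act g b x).
Proof.
by move=> nf_x; case: g; rewrite /= ?nf_shift ?nf_push //; apply: Gpq_exp_neq0.
Qed.

Lemma Gpq_actK g b : {in is_nf Gpq_exp, cancel (Gpq_act g b) (Gpq_act g (~~ b))}.
Proof.
move=> x nf_x; have ex_neq0 := Gpq_exp_neq0.
case: g => /=; try exact: pushK nf_x.
all: by rewrite shiftD //; case: b; rewrite /= ?addNr ?addrN shift0.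
Qed.

Lemma wact_wpow_a z x :
  is_nf Gpq_exp x -> wact Gpq_act false (wpow (Wgen ga) z) x = shift Gpq_exp z x.
Proof.
have ex_neq0 := Gpq_exp_neq0.
have iter_a n : {in is_nf Gpq_exp,
    wact Gpq_act false (iter n (Wmul (Wgen ga)) W1) =1 shift Gpq_exp n%:Z}.
  by elim: n => [|n IH] y nf_y /=; rewrite ?shift0 // IH // shiftD // intS.
move=> nf_x; case: z => n; first exact: iter_a.
set y := shift Gpq_exp (Negz n) x.
have nf_y : is_nf Gpq_exp y by exact: nf_shift.
have -> : x = wact Gpq_act false (iter n.+1 (Wmul (Wgen ga)) W1) y.
  by rewrite iter_a // shiftD // NegzE addrN shift0.
exact: (wactK Gpq_act_stable Gpq_actK (iter n.+1 (Wmul (Wgen ga)) W1) false nf_y).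
Qed.

Lemma Gpq_rels_act l r : Gpq_rels p q (l, r) ->
  {in is_nf Gpq_exp, wact Gpq_act false l =1 wact Gpq_act false r}.
Proof.
have ex_neq0 := Gpq_exp_neq0.
case=> [|[|]] [-> ->] x nf_x /=.
- by rewrite !shiftD // -[RHS](shift0 nf_x); congr shift; ring.
- rewrite wact_wpow_a ?nf_push // wact_wpow_a ?nf_shift // shiftD //.
  rewrite (push_shift_push ex_neq0 (false, true) nf_x).
  by congr shift; rewrite /Gpq_exp /=; ring.
- rewrite wact_wpow_a ?nf_push // wact_wpow_a ?nf_shift // shiftD //.
  rewrite (push_shift_push ex_neq0 (true, true) nf_x).
  by congr shift; rewrite /Gpq_exp /=; ring.
Qed.

Lemma size_wact_wpow_a b z y : size (wact Gpq_act b (wpow (Wgen ga) z) y) = size y.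
Proof.
have size_iter n c t : size (wact Gpq_act c (iter n (Wmul (Wgen ga)) W1) t) = size t.
  by elim: n c t => [|n IH] [] t //=; rewrite ?IH size_shift ?IH.
by case: z => n; [exact: size_iter | exact: (size_iter n.+1 (~~ b))].
Qed.

Lemma wact_Gpq_wit_nil :
  ~~ (q %| 2%:Z * p)%Z -> wact Gpq_act false (Gpq_wit p) [::] != [::].
Proof.
move=> ndvd; have ex_neq0 := Gpq_exp_neq0.
have mod_gt1 : 1 < modl Gpq_exp (false, false) by rewrite /modl /Gpq_exp /=; lia.
have one_mod : (1 %% modl Gpq_exp (false, false))%Z = 1 by rewrite modz_small ?mod_gt1.
have m1_mod : ((-1) %% modl Gpq_exp (false, false))%Z != 0.
  by apply/eqP => /dvdz_mod0P; rewrite dvdzE dvdn1; lia.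
have two_p_mod : ((2%:Z * p) %% modl Gpq_exp (false, true))%Z != 0.
  by rewrite modz_modl; apply: contra ndvd => /eqP/dvdz_mod0P.
rewrite /Gpq_wit /wcomm /= add0r one_mod /=.
rewrite wact_wpow_a /=; last by apply/and3P; split; rewrite ?modl_gt0.
rewrite add0r /push /= (negbTE two_p_mod) /= add0r (negbTE m1_mod) /=.
by apply/eqP => /(congr1 size); rewrite size_wact_wpow_a.
Qed.

End GpqAction.

Lemma weval_Gpq_wit (gT : finGroupType) (f : genG -> gT) p q :
  respects (Gpq_rels p q) f -> weval f (Gpq_wit p) = 1%g.
Proof.
move=> resp.
have cAB := resp _ _ (or_introl erefl).
rewrite weval_wcomm in cAB; move/eqP/commgP in cAB.
have AqS := resp _ _ (or_intror (or_introl erefl)).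
rewrite /= !weval_wpow -mulgA -conjgE in AqS.
have AqT := resp _ _ (or_intror (or_intror erefl)).
rewrite /= !weval_wpow -mulgA -conjgE in AqT.
rewrite weval_wcomm; apply/eqP/commgP.
rewrite /= weval_wpow -mulgA -{1}[f gs]invgK -conjgE.
have /cycleP[i ->] := expgz_mem_cycle (gcdz_order_dvd cAB AqS AqT).
by apply/commute_sym/commuteX/commute_sym/(commute_expgz_conj cAB AqS).
Qed.

Theorem theorem3p3 (p q : int) :
  p <> 0%R -> q <> 0%R -> ~~ (q %| (2%:Z * p)%R)%Z ->
  ~ residually_finite (Gpq_rels p q).
Proof.
move=> /eqP p_neq0 /eqP q_neq0 ndvd rf.
have act_eq := wact_weq (Gpq_act_stable p_neq0 q_neq0) (Gpq_actK p_neq0 q_neq0)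
  (Gpq_rels_act p_neq0 q_neq0).
have wit_neq1 : ~ weq (Gpq_rels p q) (Gpq_wit p) W1.
  by move=> /act_eq /(_ [::] isT) /eqP; apply/negP/wact_Gpq_wit_nil.
have [gT [f [resp f_wit]]] := rf _ wit_neq1.
exact: f_wit (weval_Gpq_wit resp).
Qed.
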